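(* For every integer $t\ge 1$, with $v=4t+1$, the $(v,2,1)$-BIBD on a $v$-set $X$ (whose blocks are all $2$-subsets of $X$) has a strong nesting $\phi:\mathcal{A}\to Y$ with $X\subseteq Y$ and $|Y|=w=6t+2$, and this is optimal: no strong nesting of this BIBD has $|Y|<6t+2$.
   Context: A $(v,k,\lambda)$-BIBD is a pair $(X,\mathcal{A})$ where $X$ is a set of $v$ points and $\mathcal{A}$ is a multiset of $k$-subsets of $X$ (blocks) such that every pair of distinct points lies in exactly $\lambda$ blocks. Given a $(v,k,\lambda)$-BIBD $(X,\mathcal{A})$ and a set $Y\supseteq X$ with $|Y|=w$, a map $\phi:\mathcal{A}\to Y$ is a strong nesting if (1) $\phi(A)\notin A$ for every block $A\in\mathcal{A}$, and (2) the multiset of pairs $\{\{x,\phi(A)\}: A\in\mathcal{A},\ x\in A\}$ (one pair for each block $A$, counted with multiplicity in $\mathcal{A}$, and each $x\in A$) consists of distinct pairs. A strong nesting is optimal if $w=|Y|$ is as small as possible. *)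

From mathcomp Require Import all_boot.
Set Implicit Arguments. Unset Strict Implicit. Unset Printing Implicit Defensive.

Definition complete_blocks (X : finType) : {set {set X}} :=
  [set A : {set X} | #|A| == 2].

Definition strong_nesting (X Y : finType) (iota : X -> Y)
    (blocks : {set {set X}}) (phi : {set X} -> Y) : Prop :=
  (forall A, A \in blocks -> forall x, x \in A -> phi A != iota x) /\
  (forall A B x y, A \in blocks -> B \in blocks -> x \in A -> y \in B ->
     [set iota x; phi A] = [set iota y; phi B] -> A = B /\ x = y).

From mathcomp Require Import all_boot zify.
Set Implicit Arguments. Unset Strict Implicit. Unset Printing Implicit Defensive.

(* Lower bound: let S_y be the blocks nested at y and v = |X|.  The 2|S_y|
   pairs {x, y}, x in a block of S_y, are distinct, so 2|S_y| <= v, and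
   2|S_y| <= v - 1 when v is odd.  If y is the image of a point x0, these
   pairs and the v - 1 pairs {x0, phi {x0, z}} all pass through y, whence
   2|S_y| <= |Y| - v.  Summing over Y gives v(v-1) <= (|Y| - v)(2v - 1), which
   for v = 4t+1 forces |Y| >= 6t+2.
   Upper bound: an explicit cyclic nesting, shown to be strong by decoding the
   block and the point back from every pair {x, phi A}. *)

Lemma set2_eq_cases (T : finType) (a b c d : T) :
  [set a; b] = [set c; d] -> (a = c /\ b = d) \/ (a = d /\ b = c).
Proof.
move=> E.
have : a \in [set c; d] by rewrite -E set21.
have : b \in [set c; d] by rewrite -E set22.
have : c \in [set a; b] by rewrite E set21.
have : d \in [set a; b] by rewrite E set22.
rewrite !in_set2.
by do 4![case/orP=> /eqP ?]; subst; auto.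
Qed.

Lemma set2_complete_block (T : finType) (x y : T) :
  x != y -> [set x; y] \in complete_blocks T.
Proof. by move=> xy; rewrite inE cards2 xy. Qed.

Section NestingLowerBound.
Variables (X Y : finType) (iota : X -> Y) (phi : {set X} -> Y).
Hypotheses (iota_inj : injective iota)
  (nest : strong_nesting iota (complete_blocks X) phi).

Let phi_off := proj1 nest.
Let flag_pair_inj := proj2 nest.

Definition blocks_at (y : Y) := [set A in complete_blocks X | phi A == y].

Definition flags_at (y : Y) :=
  [set Ax : {set X} * X | (Ax.1 \in blocks_at y) && (Ax.2 \in Ax.1)].

Lemma in_blocks_at y A :
  (A \in blocks_at y) = (A \in complete_blocks X) && (phi A == y).
Proof. exact: in_set. Qed.

Lemma in_flags_at y A x :
  ((A, x) \in flags_at y) = [&& A \in complete_blocks X, phi A == y & x \in A].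
Proof. by rewrite in_set /= in_blocks_at andbA. Qed.

Lemma card_flags_at y : #|flags_at y| = 2 * #|blocks_at y|.
Proof.
rewrite -sum1_card (eq_bigl _ _ (fun Ax => in_set _ _)).
rewrite -(pair_big_dep (mem (blocks_at y)) (fun A x => x \in A) (fun _ _ => 1)) /=.
rewrite mulnC -sum_nat_const; apply: eq_bigr => A.
by rewrite in_blocks_at sum1_card inE => /andP[/eqP].
Qed.

Lemma flags_at_point_inj y : {in flags_at y &, injective snd}.
Proof.
move=> [A x] [B x'] /[!in_flags_at] /and3P[bA /eqP pA xA] /and3P[bB /eqP pB xB] /= ex.
subst x'; have := flag_pair_inj bA bB xA xB.
by rewrite pA pB => /(_ erefl) [->].
Qed.

Lemma blocks_at_le_half y : #|blocks_at y| <= #|X|./2.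
Proof.
have := max_card (snd @: flags_at y).
by rewrite card_in_imset ?card_flags_at; [lia | exact: flags_at_point_inj].
Qed.

Lemma blocks_at_image_le x0 : 2 * #|blocks_at (iota x0)| + #|X| <= #|Y|.
Proof.
set y := iota x0.
set Q := (fun Ax : {set X} * X => iota Ax.2) @: flags_at y.
set R := (fun z => phi [set x0; z]) @: [set~ x0].
have x0_block z : z \in [set~ x0] -> [set x0; z] \in complete_blocks X.
  by rewrite !inE eq_sym => /set2_complete_block; rewrite inE.
have cardQ : #|Q| = 2 * #|blocks_at y|.
  rewrite -card_flags_at; apply: card_in_imset => Ax Bx hA hB /iota_inj.
  exact: flags_at_point_inj hA hB.
have cardR : #|R| = #|X|.-1.
  rewrite card_in_imset ?cardsC1 // => z1 z2 h1 h2 e.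
  have [E _] := flag_pair_inj (x0_block _ h1) (x0_block _ h2)
    (set21 _ _) (set21 _ _) (congr1 (fun u => [set y; u]) e).
  have : z1 \in [set x0; z2] by rewrite -E set22.
  by move: h1; rewrite !inE => /negbTE -> /eqP.
have disjQR : Q :&: R = set0.
  apply/setP => u; rewrite !inE; apply/negP.
  case/andP=> /imsetP[[A x] + ->] /imsetP[z /x0_block bz e].
  rewrite in_flags_at => /and3P[bA /eqP pA xA].
  have := flag_pair_inj bA bz xA (set21 _ _); rewrite pA -e setUC.
  case=> // AE _; have x0A : x0 \in A by rewrite AE set21.
  by have := phi_off bA x0A; rewrite pA eqxx.
have : Q :|: R \subset [set~ y].
  apply/subsetP => _ /setUP[/imsetP[[A x] + ->] | /imsetP[z /x0_block bz ->]].
    rewrite in_flags_at => /and3P[bA /eqP <- xA].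
    by rewrite !inE eq_sym phi_off.
  by rewrite !inE phi_off ?set21.
move/subset_leq_card; rewrite cardsU disjQR cards0 cardQ cardR cardsC1.
have X_gt0 : 0 < #|X| by apply/card_gt0P; exists x0.
have Y_gt0 : 0 < #|Y| by apply/card_gt0P; exists y.
lia.
Qed.

End NestingLowerBound.

Lemma sum_card_blocks_at (X Y : finType) (phi : {set X} -> Y) :
  \sum_(y : Y) #|blocks_at phi y| = 'C(#|X|, 2).
Proof.
rewrite -card_draws -sum1_card (partition_big phi predT) //=.
by apply: eq_bigr => y _; rewrite -sum1_card; apply: eq_bigl => A; rewrite inE.
Qed.

Theorem strong_nesting_card_bound (X Y : finType) (iota : X -> Y) (phi : {set X} -> Y) :
  injective iota -> strong_nesting iota (complete_blocks X) phi ->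
  #|X| * #|X|.-1 <= (#|Y| - #|X|) * (#|X| + #|X|./2.*2).
Proof.
move=> iota_inj nest; set s := #|Y| - #|X|.
set I := iota @: [set: X].
have cardI : #|I| = #|X| by rewrite card_imset ?cardsT.
have cardCI : #|~: I| = s by rewrite cardsCs setCK cardI.
have bound y : 2 * #|blocks_at phi y| <= (if y \in I then s else #|X|./2.*2).
  case: ifP => [/imsetP[x0 _ ->] | _].
    by have := blocks_at_image_le iota_inj nest x0; lia.
  by rewrite -mul2n leq_mul2l (blocks_at_le_half nest).
have : \sum_y 2 * #|blocks_at phi y| <= \sum_y (if y \in I then s else #|X|./2.*2).
  by apply: leq_sum => y _; exact: bound.
have -> : \sum_y 2 * #|blocks_at phi y| = #|X| * #|X|.-1.
  by rewrite -big_distrr /= sum_card_blocks_at -(mul_bin_diag _ 1) bin1.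
rewrite (bigID (mem I)) /=.
rewrite [X in _ <= X + _](eq_bigr (fun=> s)) => [|y ->//].
rewrite [X in _ <= _ + X](eq_bigr (fun=> #|X|./2.*2)) => [|y /negbTE ->//].
rewrite sum_nat_const sum_nat_cond_const cardI.
have -> : #|[set y | y \notin I]| = s.
  by rewrite -cardCI; apply: eq_card => y; rewrite !inE.
by move=> le_sum; rewrite mulnDr (mulnC s); exact: le_sum.
Qed.

Lemma strong_nesting_of_decoder (X Y : finType) (iota : X -> Y)
    (blocks : {set {set X}}) (phi : {set X} -> Y) (decode : {set Y} -> {set X} * X) :
  (forall A x, A \in blocks -> x \in A ->
     phi A != iota x /\ decode [set iota x; phi A] = (A, x)) ->
  strong_nesting iota blocks phi.
Proof.
move=> flag_ok; split=> [A bA x xA | A B x y bA bB xA yB E].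
  by have [] := flag_ok A x bA xA.
have [_ decA] := flag_ok A x bA xA; have [_ decB] := flag_ok B y bB yB.
by move: decB; rewrite -E decA => -[-> ->].
Qed.

Definition on_pairs (n : nat) (R : Type) (r0 : R) (f : nat -> nat -> R)
    (S : {set 'I_n}) : R :=
  if [pick pq : 'I_n * 'I_n | (pq.1 < pq.2) && (S == [set pq.1; pq.2])] is Some pq
  then f pq.1 pq.2 else r0.

Lemma on_pairs_set2 n R r0 (f : nat -> nat -> R) (p q : 'I_n) : p < q ->
  on_pairs r0 f [set p; q] = f p q.
Proof.
move=> pq; rewrite /on_pairs.
case: pickP => [[p' q'] /andP[/= pq' /eqP] | none]; last first.
  by have := none (p, q); rewrite /= pq eqxx.
case/set2_eq_cases => [[-> ->] // | [pE qE]].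
by move: pq pq'; rewrite pE qE; lia.
Qed.

Lemma on_pairs_set2_minmax n R r0 (f : nat -> nat -> R) (p q : 'I_n) : p != q ->
  on_pairs r0 f [set p; q] = f (minn p q) (maxn p q).
Proof.
case: (ltngtP p q) => [pq | qp | /val_inj ->]; last by rewrite eqxx.
- by rewrite on_pairs_set2.
- by rewrite setUC on_pairs_set2.
Qed.

Lemma ord_set2_sorted n (A : {set 'I_n}) : #|A| == 2 ->
  exists p q : 'I_n, p < q /\ A = [set p; q].
Proof.
case/cards2P=> p [q [neq ->]]; case: (ltngtP p q) => [pq | qp | /val_inj pq].
- by exists p, q.
- by exists q, p; rewrite setUC.
- by rewrite pq eqxx in neq.
Qed.

(* [wrap n m] is [m %% n] for [m < 2 n]; unlike [modn] it stays within the
   reach of [lia]. *)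
Definition wrap (n m : nat) := if m < n then m else m - n.

(* X = Z_(4t) + {4t} and Y = X + {4t+1} + {4t+2+j | j in Z_(2t)}.  A 2-subset
   of Z_(4t) is a chord {x, x+d} with 1 <= d <= 2t.  The block {p, 4t} goes to
   p + t; a chord of length 2t goes to 4t+1; a chord of length 2k goes to
   x+t+k, at cyclic distances t+k and t-k from its ends; a chord of length 2k+1
   goes to 4t+2 + (x+t+k mod 2t), whose offsets mod 2t from its ends are t+k
   and t-k-1.  As k varies none of these distances or offsets repeats, so the
   pair {x, phi A} determines (A, x): [unnest_nat] computes it from the sorted
   pair, reading the kind of block off the larger point. *)

Definition chord_base (t p q : nat) := if q - p <= 2 * t then p else q.
Definition chord_len (t p q : nat) := if q - p <= 2 * t then q - p else 4 * t - (q - p).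
Definition chord (t x d : nat) :=
  if x + d < 4 * t then (x, x + d) else (x + d - 4 * t, x).

Definition nest_chord (t x d : nat) : nat :=
  if d == 2 * t then 4 * t + 1
  else if odd d then 4 * t + 2 + wrap (2 * t) (wrap (4 * t) (x + t + d./2))
  else wrap (4 * t) (x + t + d./2).

Definition nest_nat (t p q : nat) : nat :=
  if q == 4 * t then wrap (4 * t) (p + t)
  else nest_chord t (chord_base t p q) (chord_len t p q).

Definition unnest_nat (t a b : nat) : nat * nat * nat :=
  if b == 4 * t + 1 then (chord t a (2 * t), a)
  else if 4 * t + 2 <= b then
    let e := wrap (2 * t) (wrap (4 * t) (b - (4 * t + 2) + 4 * t - a)) in
    if t <= e then (chord t a (2 * (e - t)).+1, a)
    else let d := (2 * (t - e)).-1 in (chord t (wrap (4 * t) (a + 4 * t - d)) d, a)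
  else if b == 4 * t then ((wrap (4 * t) (a + 3 * t), 4 * t), 4 * t)
  else
    let x := chord_base t a b in let c := chord_len t a b in
    if c == t then ((x, 4 * t), x)
    else if t < c then (chord t x (2 * (c - t)), x)
    else let d := 2 * (t - c) in (chord t (wrap (4 * t) (x + 4 * t - d)) d, x).

Ltac case_ifs :=
  repeat match goal with |- context[if ?b then _ else _] =>
    lazymatch b with context[if _ then _ else _] => fail | _ =>
    let H := fresh "H" in case: (boolP b) => H; try (exfalso; lia) end end.

Section Decoding.
Variable t : nat.
Hypothesis t_gt0 : 0 < t.

Lemma unnest_nest_inf p y : p < 4 * t -> (y == p) || (y == 4 * t) ->
  let z := wrap (4 * t) (p + t) in unnest_nat t (minn y z) (maxn y z) = (p, 4 * t, y).
Proof.
move=> ? /orP[] /eqP ->;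
  rewrite /unnest_nat /chord /chord_base /chord_len /wrap /minn /maxn /=;
  case_ifs; congr (_, _, _); lia.
Qed.

Lemma unnest_nest_diameter x y : x < 4 * t ->
  (y == x) || (y == wrap (4 * t) (x + 2 * t)) ->
  let z := 4 * t + 1 in unnest_nat t (minn y z) (maxn y z) = (chord t x (2 * t), y).
Proof.
move=> ? /orP[] /eqP ->; rewrite /unnest_nat /chord /wrap /minn /maxn /=;
  case_ifs; congr (_, _, _); lia.
Qed.

Lemma unnest_nest_odd x d y : x < 4 * t -> odd d -> d < 2 * t ->
  (y == x) || (y == wrap (4 * t) (x + d)) ->
  let z := 4 * t + 2 + wrap (2 * t) (wrap (4 * t) (x + t + d./2)) in
  unnest_nat t (minn y z) (maxn y z) = (chord t x d, y).
Proof.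
move=> ? ? ? /orP[] /eqP ->; rewrite /unnest_nat /chord /wrap /minn /maxn /=;
  case_ifs; congr (_, _, _); lia.
Qed.

Lemma unnest_nest_even x d y : x < 4 * t -> ~~ odd d -> 0 < d < 2 * t ->
  (y == x) || (y == wrap (4 * t) (x + d)) ->
  let z := wrap (4 * t) (x + t + d./2) in
  unnest_nat t (minn y z) (maxn y z) = (chord t x d, y).
Proof.
move=> ? ? ? /orP[] /eqP ->;
  rewrite /unnest_nat /chord /chord_base /chord_len /wrap /minn /maxn /=;
  case_ifs; congr (_, _, _); lia.
Qed.

Lemma unnest_nest_chord x d y : x < 4 * t -> 0 < d <= 2 * t ->
  (y == x) || (y == wrap (4 * t) (x + d)) ->
  let z := nest_chord t x d in unnest_nat t (minn y z) (maxn y z) = (chord t x d, y).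
Proof.
move=> x_lt d_range y_end; rewrite /nest_chord.
case: ifP => [/eqP d_eq | /negbT d_neq].
  by move: y_end; rewrite d_eq; apply: unnest_nest_diameter.
case: ifP => d_odd.
  by apply: unnest_nest_odd => //; lia.
by apply: unnest_nest_even => //; [rewrite d_odd | lia].
Qed.

Lemma chord_of_pair p q : p < q < 4 * t ->
  let x := chord_base t p q in let d := chord_len t p q in
  [/\ x < 4 * t, 0 < d <= 2 * t, chord t x d = (p, q) &
      forall y, (y == p) || (y == q) -> (y == x) || (y == wrap (4 * t) (x + d))].
Proof.
move=> pq; rewrite /chord_base /chord_len /chord /wrap.
split; [| | | move=> y /orP[] /eqP ->]; case_ifs; try congr (_, _); lia.
Qed.

Lemma unnest_nest_nat p q y : p < q <= 4 * t -> (y == p) || (y == q) ->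
  let z := nest_nat t p q in unnest_nat t (minn y z) (maxn y z) = (p, q, y).
Proof.
move=> /andP[pq q_le] y_end; rewrite /nest_nat.
case: eqP => [q_inf | /eqP q_fin].
  by rewrite q_inf in y_end *; apply: unnest_nest_inf; lia.
have [x_lt d_range chordE ends] := @chord_of_pair p q (ltac:(lia)).
by rewrite -chordE; apply: unnest_nest_chord => //; apply: ends.
Qed.

Lemma nest_nat_range p q : p < q <= 4 * t ->
  [/\ nest_nat t p q < 6 * t + 2, nest_nat t p q != p & nest_nat t p q != q].
Proof.
move=> pq; apply/and3P.
rewrite /nest_nat /nest_chord /chord_base /chord_len /wrap /=.
case_ifs; lia.
Qed.

End Decoding.

Section Construction.
Variable t : nat.

Local Notation X := 'I_(4 * t + 1).
Local Notation Y := 'I_(6 * t + 2).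

Let X_gt0 : 0 < 4 * t + 1. Proof. by rewrite addn1. Qed.
Let X_le_Y : 4 * t + 1 <= 6 * t + 2. Proof. lia. Qed.

Let x0 : X := Ordinal X_gt0.
Let y0 : Y := widen_ord X_le_Y x0.

Definition nest_iota : X -> Y := widen_ord X_le_Y.

Definition nest_phi : {set X} -> Y :=
  on_pairs y0 (fun p q => insubd y0 (nest_nat t p q)).

Definition nest_decode : {set Y} -> {set X} * X :=
  on_pairs (set0, x0) (fun a b =>
    let: (p, q, x) := unnest_nat t a b in
    ([set insubd x0 p; insubd x0 q], insubd x0 x)).

Lemma nest_iota_inj : injective nest_iota.
Proof. by move=> x y /(congr1 val) /= /val_inj. Qed.

Hypothesis t_gt0 : 0 < t.

Lemma nest_flag A x : A \in complete_blocks X -> x \in A ->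
  nest_phi A != nest_iota x /\ nest_decode [set nest_iota x; nest_phi A] = (A, x).
Proof.
rewrite inE => /ord_set2_sorted[p [q [pq ->]]] xA.
have pq_range : p < q <= 4 * t by have := ltn_ord q; rewrite pq; lia.
have [z_lt z_neq_p z_neq_q] := nest_nat_range t_gt0 pq_range.
have phiE : val (nest_phi [set p; q]) = nest_nat t p q.
  by rewrite /nest_phi on_pairs_set2 // insubdK.
have x_end : (x == p) || (x == q) by rewrite -in_set2.
have phi_neq : nest_phi [set p; q] != nest_iota x.
  apply/eqP => /(congr1 val); rewrite phiE /= => z_eq.
  by case/orP: x_end => /eqP xE; move: z_neq_p z_neq_q; rewrite z_eq xE eqxx.
split=> //; rewrite /nest_decode on_pairs_set2_minmax 1?eq_sym // phiE /=.
by rewrite unnest_nest_nat // !valKd.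
Qed.

Lemma nest_strong : strong_nesting nest_iota (complete_blocks X) nest_phi.
Proof. exact: strong_nesting_of_decoder nest_flag. Qed.

End Construction.

Lemma card_bound_4t1 t s : 0 < t ->
  (4 * t + 1) * (4 * t + 1).-1 <= s * (4 * t + 1 + (4 * t + 1)./2.*2) -> 2 * t < s.
Proof.
move=> t_gt0; have -> : (4 * t + 1)./2.*2 = 4 * t by lia.
rewrite addn1 /=; nia.
Qed.

Theorem theorem4p2 (t : nat) (ht : 1 <= t) :
  (exists iota : 'I_(4 * t + 1) -> 'I_(6 * t + 2),
     injective iota /\
     exists phi : {set 'I_(4 * t + 1)} -> 'I_(6 * t + 2),
       strong_nesting iota (complete_blocks _) phi) /\
  (forall (Y : finType) (iota : 'I_(4 * t + 1) -> Y)
          (phi : {set 'I_(4 * t + 1)} -> Y),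
     injective iota -> strong_nesting iota (complete_blocks _) phi ->
     6 * t + 2 <= #|Y|).
Proof.
split.
  exists (@nest_iota t); split; first exact: nest_iota_inj.
  by exists (@nest_phi t); apply: nest_strong.
move=> Y iota phi iota_inj nest.
have := strong_nesting_card_bound iota_inj nest; rewrite card_ord.
move/(card_bound_4t1 ht); lia.
Qed.
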